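(* Let $k\geq2$, $n>2\ell'_k$ and $p\in\{0,1,2\}^{[\![1,n]\!]^2}$. Let $\tau'_k=(\ell'_k,\ell'_k)$. Then $J^A(p,\ell'_k)\cap J^B(p,\ell'_k)=\varnothing$ and $$\tau'_k+I(p,\ell'_k)\subseteq J^A(p,\ell'_k)\sqcup J^B(p,\ell'_k).$$
   Context: Alphabet $\widetilde{\mathcal{A}}=\{0,1,2\}$. Let $(N_k)_{k\geq1}$ be integers with $N_k\geq4$, $\ell_0=2$, $\ell_k=N_k\ell_{k-1}$; let $N'_k\geq2$ be integers dividing $N_k$ with $N_k/N'_k\geq2$, and $\ell'_k=N'_k\ell_{k-1}$. Words: $a_0=01$, $b_0=02$; for odd $k\geq1$, $a_k=(a_{k-1})^{N_k}$ and $b_k=b_{k-1}2^{(N_k-2)\ell_{k-1}}b_{k-1}$; for even $k\geq2$, $a_k=a_{k-1}1^{(N_k-2)\ell_{k-1}}a_{k-1}$ and $b_k=(b_{k-1})^{N_k}$. $\widetilde L_k=\{a_k,1^{\ell_k},b_k,2^{\ell_k}\}$. For odd $k$: $\widetilde A'_k=\{(a_{k-1})^{N'_k},1^{\ell'_k}\}$, $\widetilde B'_k=\{b_{k-1}2^{(N'_k-1)\ell_{k-1}},\,2^{(N'_k-1)\ell_{k-1}}b_{k-1},\,2^{\ell'_k}\}$; for even $k$: $\widetilde A'_k=\{a_{k-1}1^{(N'_k-1)\ell_{k-1}},\,1^{(N'_k-1)\ell_{k-1}}a_{k-1},\,1^{\ell'_k}\}$, $\widetilde B'_k=\{(b_{k-1})^{N'_k},2^{\ell'_k}\}$.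 For a dictionary $L$ of words of length $\ell$, $\langle L\rangle=\{x\in\widetilde{\mathcal{A}}^{\mathbb{Z}}:\exists u\in[\![1,\ell]\!],\forall v\in\mathbb{Z},(\sigma^{u+\ell v}x)|_{[\![1,\ell]\!]}\in L\}$. $\widetilde X=\bigcap_{k\geq0}\langle\widetilde L_k\rangle$ and $\widetilde{\widetilde X}=\{x\in\widetilde{\mathcal{A}}^{\mathbb{Z}^2}:\exists\widetilde x\in\widetilde X,\ x(i,j)=\widetilde x(i)\ \forall(i,j)\}$ is its vertically aligned version; $\mathcal{L}(\widetilde{\widetilde X},m)$ denotes its patterns on $[\![1,m]\!]^2$. $\widetilde{\widetilde A}'_k$ (resp. $\widetilde{\widetilde B}'_k$) is the set of patterns $q\in\widetilde{\mathcal{A}}^{[\![1,\ell'_k]\!]^2}$ with $q(i,j)=\widetilde q(i)$ for some $\widetilde q\in\widetilde A'_k$ (resp. $\widetilde B'_k$). For $u\in\mathbb{Z}^2$, $\sigma^u(p)(v)=p(u+v)$. Define $I(p,\ell'_k)=\{u\in[\![0,n-2\ell'_k]\!]^2:(\sigma^u p)|_{[\![1,2\ell'_k]\!]^2}\in\mathcal{L}(\widetilde{\widetilde X},2\ell'_k)\}$, $I^A(p,\ell'_k)=\{u\in[\![0,n-\ell'_k]\!]^2:(\sigma^up)|_{[\![1,\ell'_k]\!]^2}\in\widetilde{\widetilde A}'_k\}$, $J^A(p,\ell'_k)=\bigcup_{u\in I^A(p,\ell'_k)}(u+[\![1,\ell'_k]\!]^2)$, and $I^B,J^B$ analogously with $\widetilde{\widetilde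 B}'_k$. *)

From Stdlib Require Import ZArith.
From mathcomp Require Import all_boot.
Set Implicit Arguments. Unset Strict Implicit. Unset Printing Implicit Defensive.

(* Letters of the alphabet {0,1,2} are represented by nat; words by seq nat. *)

Fixpoint ell (N : nat -> nat) (k : nat) : nat :=
  match k with 0 => 2 | k'.+1 => N k'.+1 * ell N k' end.

Definition ellp (N N' : nat -> nat) (k : nat) : nat := N' k * ell N k.-1.

Fixpoint words (N : nat -> nat) (k : nat) : seq nat * seq nat :=
  match k with
  | 0 => ([:: 0; 1], [:: 0; 2])
  | k'.+1 =>
      let a := (words N k').1 in
      let b := (words N k').2 in
      let m := N k'.+1 in
      let l := ell N k' in
      if odd k'.+1
      then (flatten (nseq m a), b ++ nseq ((m - 2) * l) 2 ++ b)
      else (a ++ nseq ((m - 2) * l) 1 ++ a, flatten (nseq m b))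
  end.

Definition aw N k := (words N k).1.
Definition bw N k := (words N k).2.

Definition dictL (N : nat -> nat) (k : nat) : seq (seq nat) :=
  [:: aw N k; nseq (ell N k) 1; bw N k; nseq (ell N k) 2].

Definition in_dict (L : seq (seq nat)) (l : nat) (x : Z -> nat) : Prop :=
  exists u : nat, 1 <= u <= l /\
    forall v : Z,
      [seq x (Z.of_nat u + Z.of_nat l * v + Z.of_nat i + 1)%Z | i <- iota 0 l] \in L.

Definition Xt (N : nat -> nat) (x : Z -> nat) : Prop :=
  forall k, in_dict (dictL N k) (ell N k) x.

(* q (a pattern on [1,m]^2, given as a function only relevant on the box)
   belongs to L(\widetilde{\widetilde X}, m): it is the restriction to [1,m]^2
   of a vertically aligned configuration x(i,j) = xt(i), xt \in \widetilde X. *)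
Definition LXX (N : nat -> nat) (m : nat) (q : nat -> nat -> nat) : Prop :=
  exists xt : Z -> nat, Xt N xt /\
    forall i j, 1 <= i <= m -> 1 <= j <= m -> q i j = xt (Z.of_nat i).

Definition Ap (N N' : nat -> nat) (k : nat) : seq (seq nat) :=
  let a := aw N k.-1 in
  let l := ell N k.-1 in
  if odd k then [:: flatten (nseq (N' k) a); nseq (ellp N N' k) 1]
  else [:: a ++ nseq ((N' k - 1) * l) 1; nseq ((N' k - 1) * l) 1 ++ a;
           nseq (ellp N N' k) 1].

Definition Bp (N N' : nat -> nat) (k : nat) : seq (seq nat) :=
  let b := bw N k.-1 in
  let l := ell N k.-1 in
  if odd k then [:: b ++ nseq ((N' k - 1) * l) 2; nseq ((N' k - 1) * l) 2 ++ b;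
                   nseq (ellp N N' k) 2]
  else [:: flatten (nseq (N' k) b); nseq (ellp N N' k) 2].

Definition inI (N N' : nat -> nat) (k n : nat) (p : nat -> nat -> nat) (u1 u2 : nat) : Prop :=
  u1 <= n - 2 * ellp N N' k /\ u2 <= n - 2 * ellp N N' k /\
  LXX N (2 * ellp N N' k) (fun i j => p (u1 + i) (u2 + j)).

Definition inIW (W : seq (seq nat)) (l n : nat) (p : nat -> nat -> nat) (u1 u2 : nat) : Prop :=
  u1 <= n - l /\ u2 <= n - l /\
  exists w, w \in W /\
    forall i j, 1 <= i <= l -> 1 <= j <= l -> p (u1 + i) (u2 + j) = nth 0 w (i - 1).

Definition inJW (W : seq (seq nat)) (l n : nat) (p : nat -> nat -> nat) (w1 w2 : nat) : Prop :=
  exists u1 u2, inIW W l n p u1 u2 /\ u1 < w1 <= u1 + l /\ u2 < w2 <= u2 + l.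

From Stdlib Require Import ZArith.
From mathcomp Require Import all_boot zify.
Set Implicit Arguments. Unset Strict Implicit. Unset Printing Implicit Defensive.

(* Every word of A'_k ends with 1 and avoids the letter 2, and every word of
   B'_k ends with 2 and avoids 1. So an A'-square and a B'-square cannot
   overlap: the last column of the one further left lies in the other one and
   would carry both letters.
   For the covering, the 2l'_k-square at u in I(p, l'_k) is a vertically
   aligned piece of a point of <L_k>. Each word of L_k is a concatenation of
   N_k blocks of length l_(k-1), and any N'_k consecutive blocks of it form a
   word of A'_k or B'_k; one of these windows of length l'_k contains the
   central column l'_k of the square, hence lies inside the square. *)

(* [w] avoids [d] and is empty or ends with [c]; admitting the empty word makes
   the property stable under concatenation. *)
Definition ends_avoiding (c d : nat) (w : seq nat) : bool :=
  (last c w == c) && (d \notin w).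

Section EndsAvoiding.
Variables c d : nat.

Lemma ends_avoiding_cat u v :
  ends_avoiding c d u -> ends_avoiding c d v -> ends_avoiding c d (u ++ v).
Proof.
case/andP=> /eqP lu du /andP[lv dv].
by rewrite /ends_avoiding last_cat lu lv mem_cat negb_or du.
Qed.

Lemma ends_avoiding_flatten_nseq m a :
  ends_avoiding c d a -> ends_avoiding c d (flatten (nseq m a)).
Proof.
move=> ha; elim: m => [|m IH] /=; first by rewrite /ends_avoiding /= eqxx.
exact: ends_avoiding_cat.
Qed.

Lemma ends_avoiding_nseq n : c != d -> ends_avoiding c d (nseq n c).
Proof.
move=> cd; rewrite /ends_avoiding mem_nseq negb_and [d == c]eq_sym cd orbT andbT.
by elim: n => //= n /eqP IH; case: n IH => //= n ->.
Qed.

Lemma nth_last_ends_avoiding w :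
  0 < size w -> ends_avoiding c d w -> nth 0 w (size w).-1 = c.
Proof. by rewrite nth_last; case: w => // x w _ /andP[/eqP]. Qed.

Lemma nth_ends_avoiding w i : d != 0 -> ends_avoiding c d w -> nth 0 w i != d.
Proof.
move=> d0 /andP[_ dw]; case: (ltnP i (size w)) => hi.
  by apply/eqP=> hd; move: dw; rewrite -hd mem_nth.
by rewrite nth_default // eq_sym.
Qed.

End EndsAvoiding.

Lemma size_flatten_nseq (T : Type) m (a : seq T) :
  size (flatten (nseq m a)) = m * size a.
Proof. by elim: m => //= m IH; rewrite size_cat IH mulSn. Qed.

Lemma take_drop_nseq (T : Type) (c : T) i j n :
  i + j <= n -> take i (drop j (nseq n c)) = nseq i c.
Proof. by move=> h; rewrite drop_nseq take_nseq //; lia. Qed.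

Lemma take_drop_flatten_nseq (T : Type) (a : seq T) s m m' j :
  size a = s -> j + m' <= m ->
  take (m' * s) (drop (j * s) (flatten (nseq m a))) = flatten (nseq m' a).
Proof.
move=> <- h; rewrite -(subnKC h) !nseqD !flatten_cat -catA.
by rewrite drop_size_cat ?take_size_cat ?size_flatten_nseq.
Qed.

Lemma take_drop_padded (T : eqType) (a : seq T) c s m m' j :
  size a = s -> 0 < m' < m -> j + m' <= m ->
  take (m' * s) (drop (j * s) (a ++ nseq ((m - 2) * s) c ++ a)) \in
    [:: a ++ nseq ((m' - 1) * s) c; nseq ((m' - 1) * s) c ++ a; nseq (m' * s) c].
Proof.
move=> sa hm' hj; rewrite !inE.
have split_filler x y : x + y = (m - 2) * s ->
    nseq ((m - 2) * s) c = nseq x c ++ nseq y c by move=> <-; rewrite nseqD.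
have [j0|j_gt0] := posnP j.
  rewrite j0 mul0n drop0 (@split_filler ((m' - 1) * s) ((m - 1 - m') * s)); last by nia.
  by rewrite -catA catA take_size_cat ?eqxx // size_cat sa size_nseq; nia.
rewrite (@split_filler ((j - 1) * s) ((m - 2) * s - (j - 1) * s)); last by nia.
rewrite -catA catA drop_size_cat; last first.
  by rewrite size_cat sa size_nseq; nia.
have [hjm|hjm] := eqVneq (j + m') m.
  rewrite take_oversize; last by rewrite size_cat sa size_nseq; nia.
  by rewrite (_ : _ - _ = (m' - 1) * s) ?eqxx ?orbT //; nia.
rewrite (_ : (m - 2) * s - (j - 1) * s = m' * s + (m - 1 - j - m') * s); last by nia.
by rewrite nseqD -catA take_size_cat ?eqxx ?orbT // size_nseq.
Qed.

Lemma index_in_window s m m' i : 0 < s -> 0 < m' <= m -> i < m * s ->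
  exists2 j, j + m' <= m & j * s <= i < (j + m') * s.
Proof.
move=> s_gt0 hm hi; exists (minn (i %/ s) (m - m')); first by lia.
have hq : i %/ s < m by rewrite ltn_divLR.
have := divn_eq i s; have := ltn_pmod i s_gt0.
case: (leqP (i %/ s) (m - m')) => hc; rewrite ?(minn_idPl hc) ?(minn_idPr (ltnW hc)); nia.
Qed.

Lemma Z_euclid_offset (L : nat) (c z : Z) : 0 < L ->
  exists v (i : nat), i < L /\ z = (c + Z.of_nat L * v + Z.of_nat i)%Z.
Proof.
move=> L_gt0; have hL : (0 < Z.of_nat L)%Z by lia.
exists ((z - c) / Z.of_nat L)%Z, (Z.to_nat ((z - c) mod Z.of_nat L)).
have := Z.mod_pos_bound (z - c) _ hL; have := Z.div_mod (z - c) (Z.of_nat L).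
lia.
Qed.

Lemma inIW_overlap (W V : seq (seq nat)) l n p c a1 a2 b1 b2 y :
  {in W, forall w, nth 0 w l.-1 = c} -> {in V, forall w i, nth 0 w i != c} ->
  inIW W l n p a1 a2 -> inIW V l n p b1 b2 ->
  a1 <= b1 < a1 + l -> a2 < y <= a2 + l -> b2 < y <= b2 + l -> False.
Proof.
move=> Wc Vc [_ [_ [wa [hwa ea]]]] [_ [_ [wb [hwb eb]]]] hab hya hyb.
have := ea l (y - a2) ltac:(lia) ltac:(lia).
have := eb (a1 + l - b1) (y - b2) ltac:(lia) ltac:(lia).
rewrite !subnKC ?subn1 ?Wc //; try lia.
by move=> -> /eqP; rewrite (negbTE (Vc _ hwb _)).
Qed.

Section Words.
Variables N N' : nat -> nat.

Lemma awS k : aw N k.+1 = if odd k.+1 then flatten (nseq (N k.+1) (aw N k))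
  else aw N k ++ nseq ((N k.+1 - 2) * ell N k) 1 ++ aw N k.
Proof. by rewrite /aw /=; case: ifP. Qed.

Lemma bwS k : bw N k.+1 = if odd k.+1
  then bw N k ++ nseq ((N k.+1 - 2) * ell N k) 2 ++ bw N k
  else flatten (nseq (N k.+1) (bw N k)).
Proof. by rewrite /bw /=; case: ifP. Qed.

Lemma aw_ends_avoiding k : ends_avoiding 1 2 (aw N k).
Proof.
elim: k => // k IH; rewrite awS; case: ifP => _.
  exact: ends_avoiding_flatten_nseq.
by do 2?apply: ends_avoiding_cat => //; apply: ends_avoiding_nseq.
Qed.

Lemma bw_ends_avoiding k : ends_avoiding 2 1 (bw N k).
Proof.
elim: k => // k IH; rewrite bwS; case: ifP => _; last first.
  exact: ends_avoiding_flatten_nseq.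
by do 2?apply: ends_avoiding_cat => //; apply: ends_avoiding_nseq.
Qed.

Lemma Ap_ends_avoiding k w : w \in Ap N N' k -> ends_avoiding 1 2 w.
Proof.
have ha := aw_ends_avoiding k.-1; have h1 := @ends_avoiding_nseq 1 2.
move: w; apply/allP; rewrite /Ap; case: ifP => _ /=;
  by rewrite ?ends_avoiding_flatten_nseq ?ends_avoiding_cat ?h1.
Qed.

Lemma Bp_ends_avoiding k w : w \in Bp N N' k -> ends_avoiding 2 1 w.
Proof.
have hb := bw_ends_avoiding k.-1; have h2 := @ends_avoiding_nseq 2 1.
move: w; apply/allP; rewrite /Bp; case: ifP => _ /=;
  by rewrite ?ends_avoiding_flatten_nseq ?ends_avoiding_cat ?h2.
Qed.

Hypothesis N_ge2 : forall k, 0 < k -> 2 <= N k.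

Lemma ell_gt0 k : 0 < ell N k.
Proof.
by elim: k => // k IH; rewrite /= muln_gt0 IH andbT; have := N_ge2 (ltn0Sn k); lia.
Qed.

Lemma size_aw k : size (aw N k) = ell N k.
Proof.
elim: k => // k IH; have := N_ge2 (ltn0Sn k); rewrite awS /=; case: ifP => _ hN.
  by rewrite size_flatten_nseq IH.
rewrite !size_cat size_nseq IH; nia.
Qed.

Lemma size_bw k : size (bw N k) = ell N k.
Proof.
elim: k => // k IH; have := N_ge2 (ltn0Sn k); rewrite bwS /=; case: ifP => _ hN.
  rewrite !size_cat size_nseq IH; nia.
by rewrite size_flatten_nseq IH.
Qed.

Lemma size_Ap k w : 0 < N' k -> w \in Ap N N' k -> size w = ellp N N' k.
Proof.
move=> hN' hw; apply/eqP; move: w hw; apply/allP.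
have sa := size_aw k.-1.
rewrite /Ap /ellp; case: ifP => _ /=;
  rewrite ?size_cat ?size_nseq ?size_flatten_nseq ?sa ?eqxx ?andbT //=.
by apply/andP; split; apply/eqP; nia.
Qed.

Lemma size_Bp k w : 0 < N' k -> w \in Bp N N' k -> size w = ellp N N' k.
Proof.
move=> hN' hw; apply/eqP; move: w hw; apply/allP.
have sb := size_bw k.-1.
rewrite /Bp /ellp; case: ifP => _ /=;
  rewrite ?size_cat ?size_nseq ?size_flatten_nseq ?sb ?eqxx ?andbT //=.
by apply/andP; split; apply/eqP; nia.
Qed.

Lemma inJW_Ap_Bp_disjoint k n p w1 w2 : 0 < N' k ->
  ~ (inJW (Ap N N' k) (ellp N N' k) n p w1 w2 /\
     inJW (Bp N N' k) (ellp N N' k) n p w1 w2).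
Proof.
move=> hN' [[a1 [a2 [ha [hwa1 hwa2]]]] [b1 [b2 [hb [hwb1 hwb2]]]]].
have l_gt0 : 0 < ellp N N' k by rewrite muln_gt0 hN' ell_gt0.
have Ap_last : {in Ap N N' k, forall w, nth 0 w (ellp N N' k).-1 = 1}.
  move=> w hw; have sw := size_Ap hN' hw.
  by rewrite -sw (nth_last_ends_avoiding _ (Ap_ends_avoiding hw)) ?sw.
have Bp_last : {in Bp N N' k, forall w, nth 0 w (ellp N N' k).-1 = 2}.
  move=> w hw; have sw := size_Bp hN' hw.
  by rewrite -sw (nth_last_ends_avoiding _ (Bp_ends_avoiding hw)) ?sw.
have Ap_no2 : {in Ap N N' k, forall w i, nth 0 w i != 2}.
  by move=> w hw i; apply: nth_ends_avoiding (Ap_ends_avoiding hw).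
have Bp_no1 : {in Bp N N' k, forall w i, nth 0 w i != 1}.
  by move=> w hw i; apply: nth_ends_avoiding (Bp_ends_avoiding hw).
case: (leqP a1 b1) => hab.
  by apply: (inIW_overlap (y := w2) Ap_last Bp_no1 ha hb); lia.
by apply: (inIW_overlap (y := w2) Bp_last Ap_no2 hb ha); lia.
Qed.

Lemma dictL_window k j W : 0 < N' k.+1 < N k.+1 -> j + N' k.+1 <= N k.+1 ->
  W \in dictL N k.+1 ->
  let w := take (ellp N N' k.+1) (drop (j * ell N k) W) in
  (w \in Ap N N' k.+1) || (w \in Bp N N' k.+1).
Proof.
move=> hN' hj; rewrite /Ap /Bp /ellp /= -/(ell N k.+1).
have sa := size_aw k; have sb := size_bw k.
have const c : take (N' k.+1 * ell N k) (drop (j * ell N k) (nseq (ell N k.+1) c))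
    = nseq (N' k.+1 * ell N k) c by rewrite take_drop_nseq //=; nia.
rewrite !inE => /or4P[] /eqP ->; rewrite ?const ?awS ?bwS /=; case: (odd k) => /=;
  rewrite ?(take_drop_flatten_nseq sa hj) ?(take_drop_flatten_nseq sb hj)
    ?(take_drop_padded 1 sa hN' hj) ?(take_drop_padded 2 sb hN' hj) ?inE ?eqxx ?orbT //.
Qed.

Lemma in_dict_window k x (z : Z) : 0 < N' k.+1 < N k.+1 ->
  in_dict (dictL N k.+1) (ell N k.+1) x ->
  exists w (e : Z), [/\ (w \in Ap N N' k.+1) || (w \in Bp N N' k.+1),
    (z - Z.of_nat (ellp N N' k.+1) <= e < z)%Z &
    forall i, i < ellp N N' k.+1 -> x (e + Z.of_nat i + 1)%Z = nth 0 w i].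
Proof.
move=> hN' [u [_ hu]].
set L := ell N k.+1; set s := ell N k; set l := ellp N N' k.+1.
have s_gt0 : 0 < s := ell_gt0 k.
have EL : L = N k.+1 * s by [].
have El : l = N' k.+1 * s by [].
have [v [i [hi ->]]] := Z_euclid_offset (Z.of_nat u + 1) z (ell_gt0 k.+1).
have [j hj hij] : exists2 j, j + N' k.+1 <= N k.+1 & j * s <= i < (j + N' k.+1) * s.
  by apply: index_in_window => //; lia.
have /(dictL_window hN' hj) hw := hu v.
eexists; exists (Z.of_nat u + Z.of_nat L * v + Z.of_nat (j * s))%Z.
split; first exact: hw.
  by rewrite El; nia.
move=> i' hi'; rewrite nth_take // nth_drop (nth_map 0) ?size_iota ?nth_iota; try nia.
by congr x; lia.
Qed.

Lemma inI_inJW k n p u1 u2 : 0 < N' k.+1 < N k.+1 -> 2 * ellp N N' k.+1 < n ->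
  inI N N' k.+1 n p u1 u2 ->
  inJW (Ap N N' k.+1) (ellp N N' k.+1) n p (ellp N N' k.+1 + u1) (ellp N N' k.+1 + u2) \/
  inJW (Bp N N' k.+1) (ellp N N' k.+1) n p (ellp N N' k.+1 + u1) (ellp N N' k.+1 + u2).
Proof.
move=> hN' hn [hu1 [hu2 [xt [hX hxt]]]].
set l := ellp N N' k.+1 in hn hu1 hu2 hxt *.
have [w [e [hw he hwe]]] := in_dict_window (Z.of_nat l) hN' (hX k.+1).
have inJ W : w \in W -> inJW W l n p (l + u1) (l + u2).
  move=> hwW; exists (u1 + Z.to_nat e), u2; split; last by lia.
  do 2 (split; first by lia); exists w; split=> // i j hi hj.
  rewrite -addnA hxt; try lia.
  rewrite -(subnK (proj1 (andP hi))) -hwe; last by lia.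
  by congr xt; lia.
by case/orP: hw => /inJ; [left | right].
Qed.

End Words.

Theorem lemma3p5 (N N' : nat -> nat)
  (hN : forall k, 1 <= k -> 4 <= N k)
  (hN' : forall k, 1 <= k -> [/\ 2 <= N' k, N' k %| N k & 2 <= N k %/ N' k])
  (k : nat) (hk : 2 <= k) (n : nat) (hn : 2 * ellp N N' k < n)
  (p : nat -> nat -> nat)
  (hp : forall i j, 1 <= i <= n -> 1 <= j <= n -> p i j < 3) :
  (forall w1 w2, ~ (inJW (Ap N N' k) (ellp N N' k) n p w1 w2 /\
                    inJW (Bp N N' k) (ellp N N' k) n p w1 w2)) /\
  (forall u1 u2, inI N N' k n p u1 u2 ->
     inJW (Ap N N' k) (ellp N N' k) n p (ellp N N' k + u1) (ellp N N' k + u2) \/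
     inJW (Bp N N' k) (ellp N N' k) n p (ellp N N' k + u1) (ellp N N' k + u2)).
Proof.
have N_ge2 j : 0 < j -> 2 <= N j by move/hN; lia.
have [N'_ge2 N'_dvd quot_ge2] := hN' k (ltnW hk).
have N'_lt_N : 0 < N' k < N k.
  by rewrite -(divnK N'_dvd) ltn_Pmull //; lia.
split=> [w1 w2 | u1 u2]; first exact: (inJW_Ap_Bp_disjoint N_ge2 (ltnW N'_ge2)).
case: k hk hn N'_lt_N {N'_ge2 N'_dvd quot_ge2} => // k _ hn N'_bounds.
exact: (inI_inJW N_ge2 N'_bounds hn).
Qed.
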